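(* Let $c,C>0$ be arbitrary and define, for functions $g$ on $(0,\infty)$, the linear operator \[ L(g)(r):=c\int_{r}^\infty\frac{g(s)}{s}\, ds-C\Big(g(r)+\frac{1}{r}\int_0^r g(s)\, ds+r\int_r^\infty \frac{g(s)}{s^2}\, ds\Big). \] Then there exists a function $W_2$ that is positive and integrable on $[0,\infty)$ such that $W_1:=L^*(W_2)>0$ on $(0,\infty)$, where $L^*$ denotes the adjoint of $L$ with respect to the $L^2([0,\infty),dr)$ pairing.
   Context: Explicitly, the adjoint is $L^*(h)(r)=\frac{c}{r}\int_0^r h(s)\,ds-C\Big(h(r)+\int_r^\infty\frac{h(s)}{s}\,ds+\frac{1}{r^2}\int_0^r s\,h(s)\,ds\Big)$, characterized by $\int_0^\infty L(g)\,h\,dr=\int_0^\infty g\,L^*(h)\,dr$. *)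

From HB Require Import structures.
From mathcomp Require Import all_boot all_order all_algebra.
From mathcomp Require Import all_classical all_reals all_analysis.
Set Implicit Arguments. Unset Strict Implicit. Unset Printing Implicit Defensive.
Import Order.TTheory GRing.Theory Num.Theory.
Local Open Scope classical_set_scope.
Local Open Scope ring_scope.

Definition Rint (R : realType) (D : set R) (f : R -> R) : R :=
  Rintegral (@lebesgue_measure R) D f.

Definition Lop (R : realType) (c C : R) (g : R -> R) (r : R) : R :=
  c * Rint `[r, +oo[ (fun s => g s / s)
  - C * (g r + r^-1 * Rint `[0, r] g + r * Rint `[r, +oo[ (fun s => g s / s ^+ 2)).

(* Its L^2([0,oo),dr)-adjoint, given explicitly in the paper:
   L^*(h)(r) = c/r int_0^r h - C (h(r) + int_r^oo h(s)/s ds + 1/r^2 int_0^r s h(s) ds). *)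
Definition Lstar (R : realType) (c C : R) (h : R -> R) (r : R) : R :=
  c / r * Rint `[0, r] h
  - C * (h r + Rint `[r, +oo[ (fun s => h s / s)
           + r ^- 2 * Rint `[0, r] (fun s => s * h s)).

From Pilot Require Import Defs.
From HB Require Import structures.
From mathcomp Require Import all_boot all_order all_algebra.
From mathcomp Require Import all_classical all_reals all_analysis.
From mathcomp Require Import measurable_realfun.
From mathcomp Require Import ring lra.
Import Order.TTheory GRing.Theory Num.Theory.
Local Open Scope classical_set_scope.
Local Open Scope ring_scope.
Import numFieldNormedType.Exports.

(* Take W2(s) = min(s^(a-1), s^-2) for a small a > 0; it is integrable on
   [0, +oo[.  Put rho(r) = min(r,1)^a / r.  The positive term (c/r) int_0^r W2
   of L^*(W2)(r) is at least c rho(r) / (2a), since the singular part s^(a-1)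
   has mass m^a / (2a) just left of m = min(r,1).  The three negative terms
   are each at most a constant times rho(r), uniformly in a <= 1/2: both
   r W2(r) and s W2(s) for s <= r are bounded by min(r,1)^a, and the tail
   integral is bounded by integrating s^(a-2) or s^-3.  Altogether
   L^*(W2)(r) >= rho(r) (c/(2a) - 4C), which is positive once 8Ca < c. *)

Section power_integrals.
Context {R : realType}.
Local Notation mu := (@lebesgue_measure R).

Lemma cvgy_powRN (p : R) : 0 < p -> x `^ (- p) @[x --> +oo] --> 0.
Proof.
move=> p0; apply/cvgr0Pnorm_lt => e e0.
pose M := e^-1 `^ p^-1.
have M0 : 0 <= M by exact: powR_ge0.
near=> x.
have xM : M < x by near: x; apply: nbhs_pinfty_gt; rewrite realE M0.
have x0 : 0 < x by exact: le_lt_trans xM.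
rewrite ger0_norm ?powR_ge0// powRN invf_plt ?posrE ?powR_gt0//.
have -> : e^-1 = M `^ p by rewrite /M -powRrM mulVf ?gt_eqF// powRr1// invr_ge0 ltW.
by apply: gt0_ltr_powR => //; rewrite nnegrE ltW.
Unshelve. all: by end_near. Qed.

Lemma continuous_powR (q x : R) : 0 < x -> {for x, continuous (fun y : R => y `^ q)}.
Proof.
move=> x0; apply/differentiable_continuous/derivable1_diffP.
by apply: derivable_powR; rewrite in_itv/= andbT.
Qed.

Lemma is_derive_powR_div (b x : R) : b != 0 -> 0 < x ->
  is_derive x 1 (fun y => b^-1 * y `^ b) (x `^ (b - 1)).
Proof.
move=> b0 x0; have := is_deriveZ b^-1 (is_derive1_powR b x0).
by rewrite scalerA mulVf// scale1r.
Qed.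

Lemma powRB1 (x p : R) : 0 < x -> x `^ (p - 1) = x `^ p / x.
Proof.
by move=> x0; rewrite powRB ?powRr1 ?(ltW x0)//; apply/implyP => _; rewrite gt_eqF.
Qed.

Lemma integral_powR_itv_cc (x y b : R) : 0 < x -> x < y -> b != 0 ->
  (\int[mu]_(s in `[x, y]) (s `^ (b - 1))%:E = ((y `^ b - x `^ b) / b)%:E)%E.
Proof.
move=> x0 xy b0; have y0 := lt_trans x0 xy.
pose F y := b^-1 * y `^ b.
have dF (z : R) : 0 < z -> is_derive z 1 F (z `^ (b - 1)) by exact: is_derive_powR_div.
have cF (z : R) : 0 < z -> {for z, continuous F}.
  by move=> z0; apply/differentiable_continuous/derivable1_diffP; have [] := dF z z0.
rewrite (@continuous_FTC2 _ _ F) //.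
- by rewrite /F -EFinB -mulrBr mulrC.
- apply: continuous_subspace_itv => z; rewrite in_itv/= => /andP[xz _].
  by apply: continuous_powR; exact: lt_le_trans xz.
- split; [|exact/cvg_at_right_filter/cF|exact/cvg_at_left_filter/cF].
  by move=> z; rewrite in_itv/= => /andP[xz _]; have [] := dF z (lt_trans x0 xz).
- move=> z; rewrite in_itv/= => /andP[xz _].
  by have Hd := dF z (lt_trans x0 xz); rewrite derive1E derive_val.
Qed.

Lemma integral_powR_itv_cy (x p : R) : 0 < x -> 0 < p ->
  (\int[mu]_(s in `[x, +oo[) (s `^ (- p - 1))%:E = (x `^ (- p) / p)%:E)%E.
Proof.
move=> x0 p0; have p0' : - p != 0 by rewrite oppr_eq0 gt_eqF.
pose F y := (- p)^-1 * y `^ (- p).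
have dF (z : R) : 0 < z -> is_derive z 1 F (z `^ (- p - 1)) by exact: is_derive_powR_div.
rewrite (@ge0_continuous_FTC2y _ _ F x 0).
- by rewrite /F -EFinB sub0r invrN mulNr opprK mulrC.
- by move=> z _; exact: powR_ge0.
- apply: continuous_subspace_itv => z; rewrite in_itv/= andbT => xz.
  by apply: continuous_powR; exact: lt_le_trans xz.
- by rewrite -(mulr0 (- p)^-1); apply: cvgM; [exact: cvg_cst | exact: cvgy_powRN].
- by move=> z xz; have [] := dF z (lt_trans x0 xz).
- apply/cvg_at_right_filter/differentiable_continuous/derivable1_diffP.
  by have [] := dF x x0.
- move=> z; rewrite in_itv/= andbT => xz.
  by have Hd := dF z (lt_trans x0 xz); rewrite derive1E derive_val.
Qed.

Lemma integral_powR_itv_oc01_le (b : R) : 0 < b ->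
  (\int[mu]_(s in `]0%R, 1%R]) (s `^ (b - 1))%:E <= (b^-1)%:E)%E.
Proof.
move=> b0; pose F n : set R := `[n.+2%:R^-1, 1]%classic.
have F_cup : \bigcup_n F n = `]0, 1]%classic.
  apply/seteqP; split => x /=.
    move=> [n _]; rewrite /F/= !in_itv/= => /andP[nx ->]; rewrite andbT.
    by apply: lt_le_trans nx; rewrite invr_gt0.
  rewrite in_itv/= => /andP[x0 x1]; exists (Num.truncn x^-1) => //; rewrite /F/=.
  rewrite in_itv/= x1 andbT invf_ple ?posrE//.
  by apply/ltW/(lt_le_trans (truncnS_gt _)); rewrite ler_nat.
have F_nd : nondecreasing_seq F.
  apply/nondecreasing_seqP => n; rewrite subsetEset => x; rewrite /F /= !in_itv/=.
  move=> /andP[nx ->]; rewrite andbT; apply: le_trans nx.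
  by rewrite lef_pV2 ?posrE// ler_nat.
have mpow D : measurable_fun D (fun s => (s `^ (b - 1))%:E).
  by apply/measurableT_comp/measurable_funTS => //; exact: measurable_powR.
have := ge0_nondecreasing_set_cvg_integral (mu := mu) F_nd (fun=> measurable_itv _)
  (fun=> mpow _) (fun n x _ => powR_ge0 x (b - 1) : (0 <= _%:E)%E).
rewrite F_cup => cvF; rewrite -(cvg_lim _ cvF)//.
apply: lime_le; first by apply/cvg_ex; eexists; exact: cvF.
apply: nearW => n /=; have n1 : n.+2%:R^-1 < 1 :> R by rewrite invf_lt1// ltr1n.
rewrite integral_powR_itv_cc ?invr_gt0 ?gt_eqF// lee_fin powR1 -[leRHS]mul1r.
by rewrite ler_wpM2r ?invr_ge0 ?ltW// lerBlDr lerDl powR_ge0.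
Qed.

End power_integrals.

Section Rint_bounds.
Context {R : realType}.
Local Notation mu := (@lebesgue_measure R).

Lemma ge0_Rint_le (D : set R) (f : R -> R) (M : R) :
  (forall x, D x -> 0 <= f x) ->
  (\int[mu]_(x in D) (f x)%:E <= M%:E)%E -> Defs.Rint D f <= M.
Proof.
move=> f0; have : (0 <= \int[mu]_(x in D) (f x)%:E)%E.
  by apply: integral_ge0 => x Dx; rewrite lee_fin f0.
by rewrite /Defs.Rint /Rintegral; case: (\int[mu]_(x in D) _)%E => //= [r _|];
  rewrite ?lee_fin// leey.
Qed.

Lemma integrable_Rint_ge (D : set R) (f : R -> R) (M : R) : measurable D ->
  mu.-integrable D (EFin \o f) ->
  (M%:E <= \int[mu]_(x in D) (f x)%:E)%E -> M <= Defs.Rint D f.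
Proof.
by move=> mD intf; rewrite -lee_fin /Defs.Rint /Rintegral fineK// integrable_fin_num.
Qed.

Lemma Rint_itv_cy_le_powR (f : R -> R) (x p : R) : 0 < x -> 0 < p ->
  measurable_fun `[x, +oo[ f ->
  (forall s, x <= s -> 0 <= f s <= s `^ (- p - 1)) ->
  Defs.Rint `[x, +oo[ f <= x `^ (- p) / p.
Proof.
move=> x0 p0 mf fle.
have f0 s : `[x, +oo[%classic s -> 0 <= f s by rewrite /= in_itv/= andbT => /fle/andP[].
apply: ge0_Rint_le => //; rewrite -integral_powR_itv_cy//.
apply: ge0_le_integral => //.
- exact/measurable_EFinP.
- apply/measurableT_comp/measurable_funTS => //; exact: measurable_powR.
- by move=> s; rewrite /= in_itv/= andbT => /fle/andP[_]; rewrite lee_fin.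
Qed.

Lemma Rint_itv_cc_le (f : R -> R) (x y M : R) : x <= y ->
  measurable_fun `[x, y] f -> (forall s, x <= s <= y -> 0 <= f s <= M) ->
  Defs.Rint `[x, y] f <= M * (y - x).
Proof.
move=> xy mf fle.
have f0 s : `[x, y]%classic s -> 0 <= f s by rewrite /= in_itv/= => /fle/andP[].
apply: ge0_Rint_le => //.
apply: (@le_trans _ _ (\int[mu]_(s in `[x, y]) (cst M%:E) s)%E).
  apply: ge0_le_integral => //.
  - exact/measurable_EFinP.
  - by move=> s; rewrite /= in_itv/= => /fle/andP[_]; rewrite lee_fin.
rewrite integral_cst//; have := lebesgue_measure_itv `[x, y]; rewrite /= lte_fin.
case: ltP => [_|yx] ->; first by rewrite -EFinB -EFinM.
by rewrite mule0 (@le_anti _ _ x y) ?xy ?yx// subrr mulr0.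
Qed.

End Rint_bounds.

Section weight.
Context {R : realType}.
Local Notation mu := (@lebesgue_measure R).

(* The value [1] on [s <= 0] only serves the pointwise positivity at [s = 0];
   a single point does not affect any integral. *)
Definition weight (a s : R) : R :=
  if s <= 0 then 1 else Num.min (s `^ (a - 1)) (s `^ (-2)).

Definition weight_rate (a r : R) : R := Num.min r 1 `^ a / r.

Lemma measurable_weight (a : R) : measurable_fun setT (weight a).
Proof.
apply: measurable_fun_ifT.
- by apply: measurable_fun_ler => //; exact: measurable_cst.
- exact: measurable_cst.
- by apply: measurable_minr; exact: measurable_powR.
Qed.

Lemma weight_gt0 (a s : R) : 0 <= s -> 0 < weight a s.
Proof.
rewrite /weight; case: ifP => // /negbT; rewrite -ltNge => s0 _.
by rewrite lt_min !powR_gt0.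
Qed.

Lemma weight_le_powRB1 (a s : R) : 0 < s -> weight a s <= s `^ (a - 1).
Proof. by move=> s0; rewrite /weight (leNgt s 0) s0/= ge_min lexx. Qed.

Lemma weight_le_powRN2 (a s : R) : 0 < s -> weight a s <= s `^ (-2).
Proof. by move=> s0; rewrite /weight (leNgt s 0) s0/= ge_min lexx orbT. Qed.

Lemma weight_itv01 (a s : R) : -1 <= a -> 0 < s <= 1 -> weight a s = s `^ (a - 1).
Proof.
move=> a1 /andP[s0 s1]; rewrite /weight (leNgt s 0) s0/= min_l//.
by apply: ger_powR; [rewrite s0 s1 | lra].
Qed.

Lemma mulr_weight_le (a s : R) : 0 < a -> 0 <= s ->
  s * weight a s <= Num.min s 1 `^ a.
Proof.
move=> a0; rewrite le_eqVlt => /predU1P[<-|s0]; first by rewrite mul0r powR_ge0.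
case: (leP s 1) => s1.
  rewrite -mulr_powRB1 ?(ltW s0)//.
  by rewrite ler_pM2l// weight_le_powRB1.
rewrite powR1.
apply: le_trans (ler_wpM2l (ltW s0) (weight_le_powRN2 a s s0)) _.
have -> : s `^ (-2) = s ^- 2 := powR_invn 2 (ltW s0).
rewrite expr2 invfM mulrA mulfV ?gt_eqF// mul1r.
by rewrite invf_le1// ltW.
Qed.

Lemma integrable_weight (a : R) : 0 < a -> mu.-integrable `[0, +oo[ (EFin \o weight a).
Proof.
move=> a0; have mW (D : set R) : measurable_fun D (EFin \o weight a).
  by apply/measurableT_comp/measurable_funTS => //; exact: measurable_weight.
have W0 x : 0 <= x -> (0 <= (weight a x)%:E)%E.
  by rewrite lee_fin => /weight_gt0/ltW.
apply/integrableP; split; first exact: mW.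
have -> : (\int[mu]_(x in `[0%R, +oo[) `|(EFin \o weight a) x| =
    \int[mu]_(x in `[0%R, +oo[) (weight a x)%:E)%E.
  by apply: eq_integral => x; rewrite inE/= in_itv/= andbT => /W0 /gee0_abs.
rewrite (@itv_bndbnd_setU _ _ _ (BRight 1%R)) ?bnd_simp// ge0_integral_setU//; last 3 first.
- exact: mW.
- by move=> x [|]/=; rewrite in_itv/= => /andP[x0 _]; apply: W0; rewrite // ltW// (lt_trans ltr01).
- apply/disj_set2P; apply/seteqP; split => x //=; rewrite !in_itv/=.
  by move=> -[/andP[_ x1] /andP[]]; rewrite ltNge x1.
apply: lte_add_pinfty.
  rewrite -integral_itv_obnd_cbnd; last exact: mW.
  have -> : (\int[mu]_(x in `]0%R, 1%R]) (weight a x)%:E =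
      \int[mu]_(x in `]0%R, 1%R]) (x `^ (a - 1))%:E)%E.
    apply: eq_integral => x; rewrite inE/= in_itv/= => x01.
    by rewrite weight_itv01// (le_trans _ (ltW a0))// lerN10.
  by rewrite (le_lt_trans (integral_powR_itv_oc01_le a a0)) ?ltry.
apply: (@le_lt_trans _ _ (\int[mu]_(x in `[1%R, +oo[) (x `^ (- 1 - 1))%:E)%E).
  have mpow : measurable_fun (`]1%R, +oo[ : set R) (fun x : R => (x `^ (- 1 - 1))%:E).
    by apply/measurableT_comp/measurable_funTS => //; exact: measurable_powR.
  rewrite -integral_itv_obnd_cbnd; last exact: mpow.
  apply: ge0_le_integral => //.
  - by move=> x; rewrite /= in_itv/= andbT => /ltW/(le_trans ler01)/W0.
  - exact: mW.
  - move=> x; rewrite /= in_itv/= andbT => x1; rewrite lee_fin (_ : - 1 - 1 = -2); last by lra.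
    by rewrite weight_le_powRN2// (lt_trans _ x1).
by rewrite (integral_powR_itv_cy 1 1) ?ltry.
Qed.

Lemma weight_mean_ge_rate (a r : R) : 0 < a -> 0 < r ->
  weight_rate a r / (2 * a) <= r^-1 * Defs.Rint `[0, r] (weight a).
Proof.
move=> a0 r0; rewrite /weight_rate mulrAC [leRHS]mulrC ler_pM2r ?invr_gt0//.
set m := Num.min r 1.
have m0 : 0 < m by rewrite lt_min r0 ltr01.
(* [d ^ a = 1/2] makes the integral of [s ^ (a - 1)] over [[d m, m]] equal
   to [m ^ a / (2 a)]. *)
pose d : R := 2^-1 `^ a^-1.
have d0 : 0 < d by rewrite powR_gt0.
have da : d `^ a = 2^-1 by rewrite -powRrM mulVf ?gt_eqF// powRr1// invr_ge0 ler0n.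
have d1 : d < 1.
  rewrite ltNge; apply/negP => d1.
  have : 1 `^ a <= d `^ a by rewrite ge0_ler_powR ?nnegrE ?ler01 ?(ltW a0) ?(ltW d0).
  by rewrite powR1 da; lra.
have dmm : d * m < m by rewrite gtr_pMl.
have -> : m `^ a / (2 * a) = (m `^ a - (d * m) `^ a) / a.
  by rewrite powRM ?(ltW d0) ?(ltW m0)// da; field; rewrite gt_eqF.
apply: integrable_Rint_ge => //.
  apply: (integrableS _ _ _ (integrable_weight a a0)) => //.
  by apply: subset_itvl; rewrite bnd_simp.
rewrite -integral_powR_itv_cc ?mulr_gt0 ?gt_eqF//.
have -> : (\int[mu]_(s in `[(d * m)%R, m]) (s `^ (a - 1))%:E =
    \int[mu]_(s in `[(d * m)%R, m]) (weight a s)%:E)%E.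
  apply: eq_integral => s; rewrite inE/= in_itv/= => /andP[dms sm].
  rewrite weight_itv01 ?(le_trans _ (ltW a0)) ?lerN10//.
  by rewrite (lt_le_trans _ dms) ?mulr_gt0// (le_trans sm) ?ge_min ?lexx ?orbT.
apply: ge0_subset_integral => //.
- by apply/measurableT_comp/measurable_funTS => //; exact: measurable_weight.
- by move=> s; rewrite /= in_itv/= lee_fin => /andP[/(weight_gt0 a)/ltW].
- apply: subset_itv; rewrite bnd_simp ?mulr_ge0 ?(ltW d0) ?(ltW m0)//.
  by rewrite ge_min lexx.
Qed.

Lemma weight_le_rate (a r : R) : 0 < a -> 0 < r -> weight a r <= weight_rate a r.
Proof. by move=> a0 r0; rewrite ler_pdivlMr// mulrC mulr_weight_le ?ltW. Qed.

Lemma weight_tail_le_rate (a r : R) : 0 < a <= 2^-1 -> 0 < r ->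
  Defs.Rint `[r, +oo[ (fun s => weight a s / s) <= 2 * weight_rate a r.
Proof.
move=> /andP[a0 a2] r0; rewrite /weight_rate.
have mW : measurable_fun `[r, +oo[ (fun s => weight a s / s).
  apply: (eq_measurable_fun (fun s => weight a s * s `^ (-1))).
    by move=> s; rewrite inE/= in_itv/= andbT => rs; rewrite powR_inv1// (le_trans _ rs)// ltW.
  by apply: measurable_funM; apply: measurable_funTS;
    [exact: measurable_weight | exact: measurable_powR].
have W0 s : r <= s -> 0 <= weight a s / s.
  move=> rs; have s0 := lt_le_trans r0 rs.
  by rewrite divr_ge0 ?(ltW s0) ?(ltW (weight_gt0 a s (ltW s0))).
case: (leP r 1) => r1.
- have p0 : 0 < 1 - a by lra.
  apply: (le_trans (Rint_itv_cy_le_powR _ _ _ r0 p0 mW _)).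
    move=> s rs; have s0 := lt_le_trans r0 rs; rewrite W0//=.
    rewrite (_ : - (1 - a) - 1 = a - 1 - 1); last by ring.
    by rewrite powRB1// ler_pM2r ?invr_gt0// weight_le_powRB1.
  rewrite (_ : - (1 - a) = a - 1); last by ring.
  have X0 : 0 <= r `^ a / r by rewrite divr_ge0 ?powR_ge0 ?ltW.
  rewrite powRB1// ler_pdivrMr//; nra.
- have p0 : 0 < 2 :> R by [].
  apply: (le_trans (Rint_itv_cy_le_powR _ _ _ r0 p0 mW _)).
    move=> s rs; have s0 := lt_le_trans r0 rs; rewrite W0//=.
    by rewrite powRB1// ler_pM2r ?invr_gt0// weight_le_powRN2.
  rewrite powR1 (powR_invn 2 (ltW r0)) expr2 invfM.
  have rV1 : r^-1 <= 1 by rewrite invf_le1 ?ltW.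
  have rV0 : 0 < r^-1 by rewrite invr_gt0.
  nra.
Qed.

Lemma weight_moment_le_rate (a r : R) : 0 < a -> 0 < r ->
  r ^- 2 * Defs.Rint `[0, r] (fun s => s * weight a s) <= weight_rate a r.
Proof.
move=> a0 r0; rewrite /weight_rate.
have : Defs.Rint `[0, r] (fun s => s * weight a s) <= Num.min r 1 `^ a * (r - 0).
  apply: Rint_itv_cc_le (ltW r0) _ _.
    by apply: measurable_funM; [exact: measurable_id |
      apply: measurable_funTS; exact: measurable_weight].
  move=> s /andP[s0 sr]; rewrite mulr_ge0 ?(ltW (weight_gt0 a s s0))//=.
  apply: le_trans (mulr_weight_le a s a0 s0) _.
  apply: ge0_ler_powR; rewrite ?nnegrE ?(ltW a0) ?le_min ?s0 ?ler01 ?(le_trans s0 sr)//.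
  by rewrite !ge_min sr lexx orbT.
rewrite subr0 => mom.
have r2 : 0 < r ^- 2 by rewrite invr_gt0 exprn_gt0.
apply: le_trans (ler_wpM2l (ltW r2) mom) _.
by rewrite le_eqVlt; apply/orP; left; apply/eqP; field; rewrite gt_eqF.
Qed.

Lemma Lstar_weight_gt0 (c C a r : R) : 0 < C -> 0 < a <= 2^-1 -> 8 * C * a < c ->
  0 < r -> 0 < Lstar c C (weight a) r.
Proof.
move=> C0 a_bd ca r0; have /andP[a0 _] := a_bd.
have c0 : 0 < c by apply: lt_trans ca; rewrite !mulr_gt0.
set rho := weight_rate a r.
have rho0 : 0 < rho by rewrite divr_gt0 ?powR_gt0// lt_min r0 ltr01.
have mean : c * rho / (2 * a) <= c / r * Defs.Rint `[0, r] (weight a).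
  rewrite -[c * rho / _]mulrA -[c / r * _]mulrA.
  by apply: ler_wpM2l; [exact: ltW | exact: weight_mean_ge_rate].
have loss : weight a r + Defs.Rint `[r, +oo[ (fun s => weight a s / s)
    + r ^- 2 * Defs.Rint `[0, r] (fun s => s * weight a s) <= 4 * rho.
  have := weight_le_rate a r a0 r0; have := weight_tail_le_rate a r a_bd r0.
  have := weight_moment_le_rate a r a0 r0; rewrite -/rho; lra.
have gap : 4 * C * rho < c * rho / (2 * a).
  rewrite ltr_pdivlMr ?mulr_gt0//; have : 0 < c - 8 * C * a by rewrite subr_gt0.
  move=> /(mulr_gt0 rho0); lra.
have := ler_wpM2l (ltW C0) loss; rewrite /Lstar; lra.
Qed.

End weight.

Theorem lemma3p5 (R : realType) (c C : R) (hc : 0 < c) (hC : 0 < C) :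
  exists W2 : R -> R,
    (forall x : R, 0 <= x -> 0 < W2 x) /\
    (@lebesgue_measure R).-integrable `[0, +oo[ (EFin \o W2) /\
    (forall r : R, 0 < r -> 0 < Lstar c C W2 r).
Proof.
pose a := Num.min 2^-1 (c / (16 * C)).
have a0 : 0 < a by rewrite lt_min invr_gt0 ltr0n divr_gt0// mulr_gt0.
have a2 : a <= 2^-1 by rewrite ge_min lexx.
have ca : 8 * C * a < c.
  have : a * (16 * C) <= c by rewrite -ler_pdivlMr ?mulr_gt0// ge_min lexx orbT.
  nra.
exists (weight a); split; first exact: weight_gt0.
split; first exact: integrable_weight.
by move=> r r0; apply: Lstar_weight_gt0; rewrite ?a0 ?a2.
Qed.
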